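(* There exists a sequence $f_{1,\infty}=(f_1,f_2,\dots)$ of surjective continuous maps from $I=[0,1]$ to itself such that (1) $f_{1,\infty}$ converges uniformly on $I$ to some continuous map $f\colon I\to I$; (2) there is a strictly increasing sequence $S$ of positive integers with $h_S(f_{1,\infty})\ge \log 3$; (3) the nonautonomous system $(I,f_{1,\infty})$ is not Li–Yorke chaotic.
   Context: A nonautonomous dynamical system (NDS) $(X,f_{1,\infty})$ consists of a compact metric space $(X,\varrho)$ and a sequence $f_{1,\infty}=(f_n)_{n\ge1}$ of continuous maps $X\to X$. Iterates: $f_1^0(x)=x$ and $f_1^n(x)=f_n(f_1^{n-1}(x))$, i.e. $f_1^n=f_n\circ\dots\circ f_1$. Li–Yorke pair: distinct $x,y\in X$ with $\limsup_{n\to\infty}\varrho(f_1^n(x),f_1^n(y))>0$ and $\liminf_{n\to\infty}\varrho(f_1^n(x),f_1^n(y))=0$. A set is Li–Yorke scrambled if any two distinct points of it form a Li–Yorke pair; the NDS is Li–Yorke chaotic if $X$ contains an uncountable Li–Yorke scrambled set. Topological sequence entropy: for a strictly increasing sequence $A=(a_i)_{i\ge1}$ of positive integers and $n\ge1$ put $\varrho_n^A(x,y)=\max_{1\le j\le n}\varrho(f_1^{a_j}(x),f_1^{a_j}(y))$. A set $E\subseteq X$ is $(n,\varepsilon,A)$-separated if $\varrho_n^A(x,y)>\varepsilon$ for all distinct $x,y\in E$; let $s_n^A(f_{1,\infty},\varepsilon)$ be the maximal cardinality of such a set. Then $h_A(f_{1,\infty})=\lim_{\varepsilon\to0}\limsup_{n\to\infty}\frac1n\log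 s_n^A(f_{1,\infty},\varepsilon)$. *)

From Stdlib Require Import Reals Lra List.
Import ListNotations.
Open Scope R_scope.

Definition inI (x : R) : Prop := 0 <= x <= 1.

Definition maps_I (g : R -> R) : Prop := forall x, inI x -> inI (g x).

Definition cont_I (g : R -> R) : Prop :=
  forall x, inI x -> forall eps, 0 < eps ->
    exists delta, 0 < delta /\
      forall y, inI y -> Rabs (y - x) < delta -> Rabs (g y - g x) < eps.

Definition surj_I (g : R -> R) : Prop :=
  forall y, inI y -> exists x, inI x /\ g x = y.

(* Nonautonomous system: F k is the map f_{k+1}.
   iterN F n = f_1^n = f_n o ... o f_1, with iterN F 0 = id. *)
Fixpoint iterN (F : nat -> R -> R) (n : nat) (x : R) : R :=
  match n with
  | O => x
  | S m => F m (iterN F m x)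
  end.

Definition unif_conv_I (F : nat -> R -> R) (g : R -> R) : Prop :=
  forall eps, 0 < eps -> exists N, forall n x, (N <= n)%nat -> inI x ->
    Rabs (F n x - g x) < eps.

(* A = (a_j)_{j>=1} strictly increasing positive integers: here a_{j+1} = A j *)
Definition strict_incr_pos (A : nat -> nat) : Prop :=
  (0 < A 0)%nat /\ forall j, (A j < A (S j))%nat.

Definition sep_pair (F : nat -> R -> R) (A : nat -> nat) (n : nat) (eps x y : R)
  : Prop :=
  exists j, (j < n)%nat /\
    Rabs (iterN F (A j) x - iterN F (A j) y) > eps.

(* E (a finite set, as a duplicate-free list of points of I) is
   (n, eps, A)-separated *)
Definition sep_set (F : nat -> R -> R) (A : nat -> nat) (n : nat) (eps : R)
  (E : list R) : Prop :=
  NoDup E /\ (forall x, In x E -> inI x) /\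
  forall x y, In x E -> In y E -> x <> y -> sep_pair F A n eps x y.

(* "s_n^A(F, eps) >= k": there is an (n,eps,A)-separated set of cardinality k *)
Definition sn_ge (F : nat -> R -> R) (A : nat -> nat) (n : nat) (eps : R)
  (k : nat) : Prop :=
  exists E, sep_set F A n eps E /\ length E = k.

(* "(1/n) log s_n^A(F,eps) > c" (s_n is a maximum, so this holds iff
   some separated set of cardinality k has (1/n) log k > c) *)
Definition rate_gt (F : nat -> R -> R) (A : nat -> nat) (n : nat) (eps c : R)
  : Prop :=
  exists k, sn_ge F A n eps k /\ ln (INR k) / INR n > c.

(* "limsup_{n->oo} (1/n) log s_n^A(F,eps) > c" *)
Definition limsup_rate_gt (F : nat -> R -> R) (A : nat -> nat) (eps c : R)
  : Prop :=
  forall N, exists n, (N <= n)%nat /\ (1 <= n)%nat /\ rate_gt F A n eps c.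

(* "h_A(F) = lim_{eps->0} limsup_n (1/n) log s_n^A(F,eps) >= c" *)
Definition seq_entropy_ge (F : nat -> R -> R) (A : nat -> nat) (c : R) : Prop :=
  forall c', c' < c -> exists eps0, 0 < eps0 /\
    forall eps, 0 < eps < eps0 -> limsup_rate_gt F A eps c'.

Definition LY_pair (F : nat -> R -> R) (x y : R) : Prop :=
  x <> y /\
  (exists d, 0 < d /\ forall N, exists n, (N <= n)%nat /\
       Rabs (iterN F n x - iterN F n y) > d) /\
  (forall e, 0 < e -> forall N, exists n, (N <= n)%nat /\
       Rabs (iterN F n x - iterN F n y) < e).

Definition LY_scrambled (F : nat -> R -> R) (S : R -> Prop) : Prop :=
  (forall x, S x -> inI x) /\
  forall x y, S x -> S y -> x <> y -> LY_pair F x y.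

Definition uncountable (S : R -> Prop) : Prop :=
  ~ exists g : R -> nat, forall x y, S x -> S y -> g x = g y -> x = y.

Definition LY_chaotic (F : nat -> R -> R) : Prop :=
  exists S, LY_scrambled F S /\ uncountable S.

(* Conjugating by t |-> t / (1 + t), the interval [0, 1) becomes the half
   line, and all maps fix 1.  Time is cut into blocks; in block b the map
   multiplies by q_b = (b + 2) / (b + 1) for (b + 1)^2 steps, then applies four
   times a map that is the identity off a window [a_b, 2 a_b] and the 3-to-1
   zigzag on it, then divides by q_b for (b + 1)^2 - 1 steps.  Every step moves
   points of [0, 1] by at most 1 / (b + 1), so the maps converge uniformly to
   the identity.  Over block b every positive orbit is multiplied by q_b, so it
   grows like b and tends to 1 in [0, 1]: all orbits converge, and there are no
   Li-Yorke pairs at all.  Rescaled by this growth, the window of block b is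
   [2^-j, 2^(1-j)] with j = floor (log2 (b + 1)), and the 2^j blocks of level j
   apply the zigzag 4 * 2^j times to it.  Coding points of the Cantor set in
   that window by binary words of length 4 * 2^j, the ends of the first
   2^(j+1) blocks separate 2^(4 * 2^j) points, i.e. at exponential rate
   log 4 > log 3. *)

From Stdlib Require Import Reals Lra Lia List Arith Classical_Prop.
Import ListNotations.
Open Scope R_scope.

(** * Piecewise linear maps *)

Definition pos_part (y : R) : R := (y + Rabs y) / 2.

Lemma pos_part_id y : 0 <= y -> pos_part y = y.
Proof. intro; unfold pos_part; rewrite Rabs_right; lra. Qed.

Lemma pos_part_0 y : y <= 0 -> pos_part y = 0.
Proof. intro; unfold pos_part; rewrite Rabs_left1; lra. Qed.

Lemma pos_part_ge0 y : 0 <= pos_part y.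
Proof. unfold pos_part; split_Rabs; lra. Qed.

Definition clamp (lo hi x : R) : R := lo + pos_part (x - lo) - pos_part (x - hi).

Lemma clamp_range lo hi x : lo <= hi -> lo <= clamp lo hi x <= hi.
Proof. intro; unfold clamp, pos_part; split_Rabs; lra. Qed.

Lemma clamp_id lo hi x : lo <= x <= hi -> clamp lo hi x = x.
Proof. intro; unfold clamp; rewrite pos_part_id, pos_part_0; lra. Qed.

Lemma clamp_lo lo hi x : lo <= hi -> x <= lo -> clamp lo hi x = lo.
Proof. intros; unfold clamp; rewrite !pos_part_0; lra. Qed.

Lemma clamp_hi lo hi x : lo <= hi -> hi <= x -> clamp lo hi x = hi.
Proof. intros; unfold clamp; rewrite !pos_part_id; lra. Qed.

Definition zigzag (u : R) : R := 3 * u - 6 * pos_part (u - 1/3) + 6 * pos_part (u - 2/3).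

Lemma zigzag_lo u : u <= 1/3 -> zigzag u = 3 * u.
Proof. intro; unfold zigzag; rewrite !pos_part_0; lra. Qed.

Lemma zigzag_mid u : 1/3 <= u <= 2/3 -> zigzag u = 2 - 3 * u.
Proof. intro; unfold zigzag; rewrite pos_part_id, pos_part_0; lra. Qed.

Lemma zigzag_hi u : 2/3 <= u -> zigzag u = 3 * u - 2.
Proof. intro; unfold zigzag; rewrite !pos_part_id; lra. Qed.

Lemma zigzag_range u : 0 <= u <= 1 -> 0 <= zigzag u <= 1.
Proof.
  intro. destruct (Rle_dec u (1/3)); [rewrite zigzag_lo; lra|].
  destruct (Rle_dec u (2/3)); [rewrite zigzag_mid; lra | rewrite zigzag_hi; lra].
Qed.

Lemma zigzag_0 : zigzag 0 = 0.
Proof. rewrite zigzag_lo; lra. Qed.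

Lemma zigzag_1 : zigzag 1 = 1.
Proof. rewrite zigzag_hi; lra. Qed.
Lemma div_le_1 x a : 0 < a -> x <= a -> x / a <= 1.
Proof.
  intros. apply (Rmult_le_reg_r a); auto.
  unfold Rdiv; rewrite Rmult_assoc, Rinv_l; lra.
Qed.

Lemma div_ge_1 x a : 0 < a -> a <= x -> 1 <= x / a.
Proof.
  intros. apply (Rmult_le_reg_r a); auto.
  unfold Rdiv; rewrite Rmult_assoc, Rinv_l; lra.
Qed.

Lemma window_param a t : 0 < a -> a <= t <= 2 * a -> 0 <= t / a - 1 <= 1.
Proof.
  intros Ha Ht. pose proof (div_ge_1 t a Ha ltac:(lra)).
  pose proof (div_le_1 t (2 * a) ltac:(lra) ltac:(lra)).
  replace (t / (2 * a)) with (t / a / 2) in H0 by (field; lra). lra.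
Qed.

Definition zigzag_on (a t : R) : R :=
  t + a * (zigzag (clamp 0 1 (t / a - 1)) - clamp 0 1 (t / a - 1)).

Lemma zigzag_on_below a t : 0 < a -> t <= a -> zigzag_on a t = t.
Proof.
  intros Ha Ht. pose proof (div_le_1 t a Ha Ht).
  unfold zigzag_on. rewrite clamp_lo, zigzag_0 by lra. ring.
Qed.

Lemma zigzag_on_above a t : 0 < a -> 2 * a <= t -> zigzag_on a t = t.
Proof.
  intros Ha Ht. pose proof (div_ge_1 t (2 * a) ltac:(lra) Ht).
  replace (t / (2 * a)) with (t / a / 2) in H by (field; lra).
  unfold zigzag_on. rewrite clamp_hi, zigzag_1 by lra. ring.
Qed.

Lemma zigzag_on_window a s : 0 < a -> 0 <= s <= 1 ->
  zigzag_on a (a * (1 + s)) = a * (1 + zigzag s).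
Proof.
  intros Ha Hs. unfold zigzag_on.
  replace (a * (1 + s) / a - 1) with s by (field; lra).
  rewrite clamp_id by lra. ring.
Qed.

Lemma zigzag_on_in_window a t : 0 < a -> a <= t <= 2 * a -> a <= zigzag_on a t <= 2 * a.
Proof.
  intros Ha Ht. pose proof (window_param a t Ha Ht) as Hs.
  replace t with (a * (1 + (t / a - 1))) by (field; lra).
  rewrite zigzag_on_window by lra. pose proof (zigzag_range (t / a - 1) Hs). nra.
Qed.

Lemma zigzag_on_scale a l s : 0 < a -> 0 < l -> zigzag_on a (l * s) = l * zigzag_on (a / l) s.
Proof.
  intros Ha Hl. unfold zigzag_on.
  replace (l * s / a - 1) with (s / (a / l) - 1) by (field; lra).
  field; lra.
Qed.

Lemma zigzag_on_ge a t l : 0 < a -> l <= t -> (l <= a \/ 2 * a <= l) -> l <= zigzag_on a t.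
Proof.
  intros Ha Ht Hl. destruct (Rle_dec t a); [rewrite zigzag_on_below; lra|].
  destruct (Rle_dec (2 * a) t); [rewrite zigzag_on_above; lra|].
  pose proof (zigzag_on_in_window a t Ha ltac:(lra)); lra.
Qed.

Lemma zigzag_on_nonneg a t : 0 < a -> 0 <= t -> 0 <= zigzag_on a t.
Proof. intros; apply zigzag_on_ge; lra. Qed.

Lemma zigzag_on_surj a t' : 0 < a -> 0 <= t' -> exists t, 0 <= t /\ zigzag_on a t = t'.
Proof.
  intros Ha Ht. destruct (Rle_dec t' a).
  { exists t'; split; auto; apply zigzag_on_below; lra. }
  destruct (Rle_dec (2 * a) t').
  { exists t'; split; auto; apply zigzag_on_above; lra. }
  set (s := t' / a - 1).
  assert (Hs : 0 <= s <= 1) by (apply window_param; lra).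
  exists (a * (1 + s / 3)). split; [nra|].
  rewrite zigzag_on_window by lra. rewrite zigzag_lo by lra. unfold s. field. lra.
Qed.

Definition lipschitz (f : R -> R) : Prop :=
  exists L, 0 <= L /\ forall x y, Rabs (f x - f y) <= L * Rabs (x - y).

Lemma lipschitz_cont_I f : lipschitz f -> cont_I f.
Proof.
  intros [L [HL Hf]] x _ eps Heps. exists (eps / (L + 1)). split.
  - apply Rdiv_lt_0_compat; lra.
  - intros y _ Hyx. specialize (Hf y x). pose proof (Rabs_pos (y - x)).
    assert (eps / (L + 1) * (L + 1) = eps) by (field; lra). nra.
Qed.

Lemma lipschitz_ext f f' : (forall x, f x = f' x) -> lipschitz f -> lipschitz f'.
Proof. intros E [L [HL Hf]]; exists L; split; auto; intros x y; rewrite <- !E; auto. Qed.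

Lemma lipschitz_affine c d : lipschitz (fun x => c * x + d).
Proof.
  exists (Rabs c); split; [apply Rabs_pos|]; intros x y.
  replace (c * x + d - (c * y + d)) with (c * (x - y)) by ring.
  rewrite Rabs_mult; lra.
Qed.

Lemma lipschitz_plus f f' : lipschitz f -> lipschitz f' -> lipschitz (fun x => f x + f' x).
Proof.
  intros [L [HL Hf]] [L' [HL' Hf']]. exists (L + L'); split; [lra|]; intros x y.
  replace (f x + f' x - (f y + f' y)) with ((f x - f y) + (f' x - f' y)) by ring.
  specialize (Hf x y); specialize (Hf' x y).
  pose proof (Rabs_triang (f x - f y) (f' x - f' y)). lra.
Qed.

Lemma lipschitz_scal c f : lipschitz f -> lipschitz (fun x => c * f x).
Proof.
  intros [L [HL Hf]]. exists (Rabs c * L); split; [pose proof (Rabs_pos c); nra|]; intros x y.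
  replace (c * f x - c * f y) with (c * (f x - f y)) by ring.
  rewrite Rabs_mult. pose proof (Rabs_pos c). specialize (Hf x y). nra.
Qed.

Lemma lipschitz_minus f f' : lipschitz f -> lipschitz f' -> lipschitz (fun x => f x - f' x).
Proof.
  intros Hf Hf'. apply (lipschitz_ext (fun x => f x + -1 * f' x)); [intro; ring|].
  apply lipschitz_plus, lipschitz_scal; auto.
Qed.

Lemma lipschitz_comp f f' : lipschitz f -> lipschitz f' -> lipschitz (fun x => f' (f x)).
Proof.
  intros [L [HL Hf]] [L' [HL' Hf']]. exists (L' * L); split; [nra|]; intros x y.
  specialize (Hf x y); specialize (Hf' (f x) (f y)). nra.
Qed.

Lemma lipschitz_clamp lo hi : lipschitz (clamp lo hi).
Proof. exists 1; split; [lra|]; intros x y; unfold clamp, pos_part; split_Rabs; lra. Qed.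

Lemma lipschitz_zigzag : lipschitz zigzag.
Proof. exists 15; split; [lra|]; intros x y; unfold zigzag, pos_part; split_Rabs; lra. Qed.

Lemma lipschitz_zigzag_on a : lipschitz (zigzag_on a).
Proof.
  assert (Hw : lipschitz (fun t => clamp 0 1 (t / a - 1))).
  { apply (lipschitz_ext (fun t => clamp 0 1 (/ a * t + -1))).
    { intro; f_equal; unfold Rdiv; ring. }
    apply (lipschitz_comp (fun t => / a * t + -1) (clamp 0 1));
      [apply lipschitz_affine|apply lipschitz_clamp]. }
  apply (lipschitz_ext (fun t => (1 * t + 0) +
           a * (zigzag (clamp 0 1 (t / a - 1)) - clamp 0 1 (t / a - 1)))).
  { intro; unfold zigzag_on; ring. }
  apply lipschitz_plus; [apply lipschitz_affine|].
  apply lipschitz_scal, lipschitz_minus; [|exact Hw].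
  exact (lipschitz_comp _ _ Hw lipschitz_zigzag).
Qed.

(** * Conjugation to the half line *)

Definition squash (t : R) : R := t / (1 + t).
Definition unsquash (x : R) : R := x / (1 - x).

Lemma unsquash_squash t : 0 <= t -> unsquash (squash t) = t.
Proof. intro; unfold unsquash, squash; field; split; lra. Qed.

Lemma squash_unsquash x : x < 1 -> squash (unsquash x) = x.
Proof. intro; unfold unsquash, squash; field; split; lra. Qed.

Lemma unsquash_nonneg x : 0 <= x < 1 -> 0 <= unsquash x.
Proof. intro; apply Rle_mult_inv_pos; lra. Qed.

Lemma squash_range t : 0 <= t -> 0 <= squash t < 1.
Proof.
  intro; unfold squash; split; [apply Rle_mult_inv_pos; lra|].
  apply (Rmult_lt_reg_r (1 + t)); [lra|]. unfold Rdiv; rewrite Rmult_assoc, Rinv_l; lra.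
Qed.

Lemma squash_sub s t : 0 <= s -> 0 <= t -> squash s - squash t = (s - t) / ((1 + s) * (1 + t)).
Proof. intros; unfold squash; field; split; lra. Qed.

Lemma squash_le s t : 0 <= s -> s <= t -> squash s <= squash t.
Proof.
  intros. cut (0 <= squash t - squash s); [lra|]. rewrite squash_sub by lra.
  apply Rle_mult_inv_pos; nra.
Qed.

Lemma one_minus_squash t : 0 <= t -> 1 - squash t = / (1 + t).
Proof. intros; unfold squash; field; lra. Qed.

Lemma lipschitz_squash_pos_part : lipschitz (fun s => squash (pos_part s)).
Proof.
  exists 1; split; [lra|]; intros x y.
  pose proof (pos_part_ge0 x); pose proof (pos_part_ge0 y).
  rewrite squash_sub by auto. unfold Rdiv. rewrite Rabs_mult.
  rewrite (Rabs_right (/ _)) by (apply Rle_ge, Rlt_le, Rinv_0_lt_compat; nra).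
  assert (Rabs (pos_part x - pos_part y) <= Rabs (x - y)) by (unfold pos_part; split_Rabs; lra).
  assert (/ ((1 + pos_part x) * (1 + pos_part y)) <= 1).
  { rewrite <- Rinv_1. apply Rinv_le_contravar; nra. }
  pose proof (Rabs_pos (pos_part x - pos_part y)). nra.
Qed.

Lemma lipschitz_unsquash_clamp lo hi : 0 <= lo <= hi -> hi < 1 ->
  lipschitz (fun x => unsquash (clamp lo hi x)).
Proof.
  intros Hlo Hhi. exists (/ ((1 - hi) * (1 - hi))). split.
  { apply Rlt_le, Rinv_0_lt_compat; nra. }
  intros x y. pose proof (clamp_range lo hi x ltac:(lra)). pose proof (clamp_range lo hi y ltac:(lra)).
  assert (Hc : Rabs (clamp lo hi x - clamp lo hi y) <= Rabs (x - y))
    by (unfold clamp, pos_part; split_Rabs; lra).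
  set (u := clamp lo hi x) in *. set (v := clamp lo hi y) in *.
  replace (unsquash u - unsquash v) with ((u - v) * / ((1 - u) * (1 - v)))
    by (unfold unsquash; field; split; lra).
  rewrite Rabs_mult, (Rabs_right (/ _)) by (apply Rle_ge, Rlt_le, Rinv_0_lt_compat; nra).
  assert (/ ((1 - u) * (1 - v)) <= / ((1 - hi) * (1 - hi))) by (apply Rinv_le_contravar; nra).
  assert (0 < / ((1 - u) * (1 - v))) by (apply Rinv_0_lt_compat; nra).
  pose proof (Rabs_pos (u - v)). nra.
Qed.

Definition scale_I (q x : R) : R := q * clamp 0 1 x / (1 + (q - 1) * clamp 0 1 x).

Lemma scale_I_squash q t : 0 < q -> 0 <= t -> scale_I q (squash t) = squash (q * t).
Proof.
  intros Hq Ht. pose proof (squash_range t Ht). unfold scale_I. rewrite clamp_id by lra.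
  unfold squash. field. split; nra.
Qed.

Lemma scale_I_1 q : 0 < q -> scale_I q 1 = 1.
Proof. intro; unfold scale_I; rewrite clamp_id by lra; field; lra. Qed.

Lemma lipschitz_scale_I q : 1/2 <= q -> lipschitz (scale_I q).
Proof.
  intro Hq. exists (4 * q). split; [lra|]. intros x y.
  pose proof (clamp_range 0 1 x ltac:(lra)); pose proof (clamp_range 0 1 y ltac:(lra)).
  assert (Hc : Rabs (clamp 0 1 x - clamp 0 1 y) <= Rabs (x - y))
    by (unfold clamp, pos_part; split_Rabs; lra).
  unfold scale_I. set (u := clamp 0 1 x) in *. set (v := clamp 0 1 y) in *.
  assert (1/2 <= 1 + (q - 1) * u) by (destruct (Rle_dec 1 q); nra).
  assert (1/2 <= 1 + (q - 1) * v) by (destruct (Rle_dec 1 q); nra).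
  set (D := (1 + (q - 1) * u) * (1 + (q - 1) * v)).
  replace (q * u / (1 + (q - 1) * u) - q * v / (1 + (q - 1) * v)) with (q * (u - v) * / D)
    by (unfold D; field; lra).
  assert (0 < / D <= 4).
  { split; [apply Rinv_0_lt_compat; unfold D; nra|].
    replace 4 with (/ (1/4)) by field. apply Rinv_le_contravar; unfold D; nra. }
  rewrite !Rabs_mult, (Rabs_right q), (Rabs_right (/ D)) by lra.
  pose proof (Rabs_pos (u - v)).
  assert (q * Rabs (u - v) * / D <= q * Rabs (u - v) * 4) by (apply Rmult_le_compat_l; nra).
  nra.
Qed.

(** See [zigzag_I_squash]; the clamps only serve to make it globally
    Lipschitz. *)
Definition zigzag_I (a x : R) : R :=
  x + (squash (pos_part (zigzag_on a (unsquash (clamp (squash a) (squash (2 * a)) x))))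
       - clamp (squash a) (squash (2 * a)) x).

Lemma zigzag_I_squash a t : 0 < a -> 0 <= t -> zigzag_I a (squash t) = squash (zigzag_on a t).
Proof.
  intros Ha Ht. assert (squash a <= squash (2 * a)) by (apply squash_le; lra).
  unfold zigzag_I. destruct (Rle_dec t a).
  - rewrite clamp_lo by (auto; apply squash_le; lra). rewrite unsquash_squash by lra.
    rewrite (zigzag_on_below a a), (zigzag_on_below a t), pos_part_id by lra. ring.
  - destruct (Rle_dec (2 * a) t).
    + rewrite clamp_hi by (auto; apply squash_le; lra). rewrite unsquash_squash by lra.
      rewrite (zigzag_on_above a (2 * a)), (zigzag_on_above a t), pos_part_id by lra. ring.
    + rewrite clamp_id by (split; apply squash_le; lra). rewrite unsquash_squash by lra.
      rewrite pos_part_id by (apply zigzag_on_nonneg; lra). ring.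
Qed.

Lemma zigzag_I_1 a : 0 < a -> zigzag_I a 1 = 1.
Proof.
  intro Ha. assert (squash a <= squash (2 * a)) by (apply squash_le; lra).
  pose proof (squash_range (2 * a) ltac:(lra)).
  unfold zigzag_I. rewrite clamp_hi, unsquash_squash by lra.
  rewrite zigzag_on_above, pos_part_id by lra. ring.
Qed.

Lemma lipschitz_zigzag_I a : 0 < a -> lipschitz (zigzag_I a).
Proof.
  intro Ha. assert (squash a <= squash (2 * a)) by (apply squash_le; lra).
  pose proof (squash_range a ltac:(lra)); pose proof (squash_range (2 * a) ltac:(lra)).
  apply (lipschitz_plus (fun x => x)).
  { apply (lipschitz_ext (fun x => 1 * x + 0)); [intro; ring|apply lipschitz_affine]. }
  apply lipschitz_minus; [|apply lipschitz_clamp].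
  apply (lipschitz_comp _ (fun s => squash (pos_part s))); [|apply lipschitz_squash_pos_part].
  apply (lipschitz_comp _ (zigzag_on a)); [|apply lipschitz_zigzag_on].
  apply lipschitz_unsquash_clamp; lra.
Qed.

Section Conjugate.
Variables f phi : R -> R.
Hypothesis f_squash : forall t, 0 <= t -> f (squash t) = squash (phi t) /\ 0 <= phi t.
Hypothesis f_1 : f 1 = 1.

Lemma conj_maps_I : maps_I f.
Proof.
  intros x [Hx0 Hx1]. destruct (Req_dec x 1) as [->|Hx]; [rewrite f_1; red; lra|].
  rewrite <- (squash_unsquash x) by lra.
  destruct (f_squash (unsquash x)) as [-> Hphi]; [apply unsquash_nonneg; lra|].
  pose proof (squash_range _ Hphi). red; lra.
Qed.

Lemma conj_surj_I : (forall t', 0 <= t' -> exists t, 0 <= t /\ phi t = t') -> surj_I f.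
Proof.
  intros Hphi y [Hy0 Hy1]. destruct (Req_dec y 1) as [->|Hy]; [exists 1; split; [red; lra|auto]|].
  destruct (Hphi (unsquash y)) as [t [Ht E]]; [apply unsquash_nonneg; lra|].
  exists (squash t). split; [pose proof (squash_range t Ht); red; lra|].
  rewrite (proj1 (f_squash t Ht)), E. apply squash_unsquash; lra.
Qed.

Lemma conj_dist_id e : 0 <= e -> (forall t, 0 <= t -> Rabs (squash (phi t) - squash t) <= e) ->
  forall x, inI x -> Rabs (f x - x) <= e.
Proof.
  intros He Hphi x [Hx0 Hx1]. destruct (Req_dec x 1) as [->|Hx].
  { rewrite f_1, Rminus_diag, Rabs_R0; auto. }
  rewrite <- (squash_unsquash x) by lra.
  assert (Hu : 0 <= unsquash x) by (apply unsquash_nonneg; lra).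
  rewrite (proj1 (f_squash _ Hu)). auto.
Qed.
End Conjugate.

Lemma squash_scale_dist q t : 0 < q -> 0 <= t -> Rabs (squash (q * t) - squash t) <= Rabs (q - 1).
Proof.
  intros Hq Ht. rewrite squash_sub by nra.
  replace (q * t - t) with ((q - 1) * t) by ring.
  unfold Rdiv. rewrite !Rabs_mult, (Rabs_right t) by lra.
  rewrite (Rabs_right (/ _)) by (apply Rle_ge, Rlt_le, Rinv_0_lt_compat; nra).
  assert (0 <= t * / ((1 + q * t) * (1 + t)) <= 1).
  { split; [apply Rle_mult_inv_pos; nra|].
    apply (Rmult_le_reg_r ((1 + q * t) * (1 + t))); [nra|].
    rewrite Rmult_assoc, Rinv_l by nra. nra. }
  pose proof (Rabs_pos (q - 1)). nra.
Qed.

Lemma squash_zigzag_on_dist a t : 0 < a -> 0 <= t -> Rabs (squash (zigzag_on a t) - squash t) <= / a.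
Proof.
  intros Ha Ht. assert (0 < / a) by (apply Rinv_0_lt_compat; lra).
  destruct (Rle_dec t a).
  { rewrite zigzag_on_below, Rminus_diag, Rabs_R0; lra. }
  destruct (Rle_dec (2 * a) t).
  { rewrite zigzag_on_above, Rminus_diag, Rabs_R0; lra. }
  pose proof (zigzag_on_in_window a t Ha ltac:(lra)).
  assert (squash a <= squash (zigzag_on a t)) by (apply squash_le; lra).
  assert (squash a <= squash t) by (apply squash_le; lra).
  pose proof (squash_range (zigzag_on a t) ltac:(lra)). pose proof (squash_range t Ht).
  assert (1 - squash a <= / a).
  { rewrite one_minus_squash by lra. apply Rinv_le_contravar; lra. }
  split_Rabs; lra.
Qed.

Definition half_len (b : nat) : nat := S b * S b.
Definition block_len (b : nat) : nat := 2 * half_len b + 3.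

Lemma half_len_pos b : (1 <= half_len b)%nat.
Proof. unfold half_len; lia. Qed.

Fixpoint block_start (b : nat) : nat :=
  match b with O => O | S b' => block_start b' + block_len b' end.

Fixpoint block_pos (n : nat) : nat * nat :=
  match n with
  | O => (O, O)
  | S n' => let '(b, i) := block_pos n' in
            if S i <? block_len b then (b, S i) else (S b, O)
  end.

Lemma block_pos_spec n b i : block_pos n = (b, i) ->
  (i < block_len b)%nat /\ n = (block_start b + i)%nat.
Proof.
  revert b i; induction n as [|n IH]; simpl; intros b i E.
  - inversion E; subst. unfold block_len; simpl; lia.
  - destruct (block_pos n) as [b0 i0]. destruct (IH b0 i0 eq_refl) as [H1 H2].
    destruct (S i0 <? block_len b0) eqn:L; inversion E; subst.
    + apply Nat.ltb_lt in L. lia.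
    + apply Nat.ltb_ge in L. simpl. unfold block_len in *; lia.
Qed.

Lemma block_start_mono b b' : (b <= b')%nat -> (block_start b <= block_start b')%nat.
Proof. induction 1; simpl; lia. Qed.

Lemma block_pos_start b i : (i < block_len b)%nat -> block_pos (block_start b + i) = (b, i).
Proof.
  intro Hi. destruct (block_pos (block_start b + i)) as [b' i'] eqn:E.
  destruct (block_pos_spec _ _ _ E) as [H1 H2].
  destruct (Nat.lt_trichotomy b b') as [Hl|[->|Hl]].
  - pose proof (block_start_mono (S b) b' Hl) as Hs. simpl in Hs. lia.
  - f_equal. lia.
  - pose proof (block_start_mono (S b') b Hl) as Hs. simpl in Hs. lia.
Qed.

Lemma block_pos_late n b0 b i : (block_start b0 <= n)%nat -> block_pos n = (b, i) -> (b0 <= b)%nat.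
Proof.
  intros Hn E. destruct (block_pos_spec _ _ _ E) as [Hi ->].
  destruct (Nat.le_gt_cases b0 b) as [|Hb]; auto.
  pose proof (block_start_mono (S b) b0 Hb) as Hs. simpl in Hs. lia.
Qed.

Definition growth (b : nat) : R := INR (S b).
Definition ratio (b : nat) : R := (growth b + 1) / growth b.
Definition level (b : nat) : nat := Nat.log2 (S b).
Definition width (b : nat) : R := / 2 ^ level b.

(** After [half_len b] steps of block [b] the point [growth b * c] has become
    [ratio b ^ half_len b * growth b * c], on which [zigzag_on (threshold b)]
    acts as [zigzag_on (width b)] on [c]; [threshold_ge] keeps its effect on
    [[0, 1]] below [/ growth b]. *)
Definition threshold (b : nat) : R := growth b * ratio b ^ half_len b * width b.

Lemma growth_ge_1 b : 1 <= growth b.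
Proof. unfold growth. rewrite S_INR. pose proof (pos_INR b). lra. Qed.

Lemma ratio_growth b : ratio b * growth b = growth b + 1.
Proof. pose proof (growth_ge_1 b). unfold ratio. field. lra. Qed.

Lemma ratio_gt_1 b : 1 < ratio b.
Proof. pose proof (ratio_growth b); pose proof (growth_ge_1 b); nra. Qed.

Lemma ratio_le_2 b : ratio b <= 2.
Proof. pose proof (ratio_growth b); pose proof (growth_ge_1 b); nra. Qed.

Lemma width_pos b : 0 < width b.
Proof. apply Rinv_0_lt_compat, pow_lt; lra. Qed.

Lemma growth_width_ge_1 b : 1 <= growth b * width b.
Proof.
  unfold growth, width, level. destruct (Nat.log2_spec (S b)) as [H _]; [lia|].
  apply le_INR in H. rewrite pow_INR in H. change (INR 2) with 2 in H.
  assert (0 < 2 ^ Nat.log2 (S b)) by (apply pow_lt; lra).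
  apply (Rmult_le_reg_r (2 ^ Nat.log2 (S b))); auto.
  rewrite Rmult_assoc, Rinv_l; lra.
Qed.

Lemma threshold_ge b : growth b + 1 <= threshold b.
Proof.
  pose proof (growth_ge_1 b). pose proof (growth_width_ge_1 b). unfold threshold.
  assert (Hm : growth b + 1 <= ratio b ^ half_len b).
  { replace (ratio b) with (1 + / growth b) by (unfold ratio; field; lra).
    eapply Rle_trans; [|apply poly, Rinv_0_lt_compat; lra].
    unfold half_len. rewrite mult_INR. fold (growth b). right. field. lra. }
  replace (growth b * ratio b ^ half_len b * width b)
    with (ratio b ^ half_len b * (growth b * width b)) by ring. nra.
Qed.

Lemma threshold_pos b : 0 < threshold b.
Proof. pose proof (threshold_ge b); pose proof (growth_ge_1 b); lra. Qed.

Lemma inv_ratio_bounds b : 1/2 <= / ratio b /\ 0 < / ratio b.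
Proof.
  pose proof (ratio_le_2 b). pose proof (ratio_gt_1 b).
  split; [|apply Rinv_0_lt_compat; lra].
  replace (1/2) with (/2) by field. apply Rinv_le_contravar; lra.
Qed.

Definition phi_step (b i : nat) (t : R) : R :=
  if (i <? half_len b)%nat then ratio b * t
  else if (i <? half_len b + 4)%nat then zigzag_on (threshold b) t
  else / ratio b * t.

Definition f_step (b i : nat) (x : R) : R :=
  if (i <? half_len b)%nat then scale_I (ratio b) x
  else if (i <? half_len b + 4)%nat then zigzag_I (threshold b) x
  else scale_I (/ ratio b) x.

Definition fseq (n : nat) : R -> R := let '(b, i) := block_pos n in f_step b i.
Definition phiseq (n : nat) : R -> R := let '(b, i) := block_pos n in phi_step b i.

Lemma f_step_squash b i t : 0 <= t ->
  f_step b i (squash t) = squash (phi_step b i t) /\ 0 <= phi_step b i t.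
Proof.
  intro Ht. pose proof (ratio_gt_1 b). pose proof (inv_ratio_bounds b). pose proof (threshold_pos b).
  unfold f_step, phi_step. destruct (i <? half_len b)%nat; [|destruct (i <? half_len b + 4)%nat].
  - split; [apply scale_I_squash; lra|nra].
  - split; [apply zigzag_I_squash; lra|apply zigzag_on_nonneg; lra].
  - split; [apply scale_I_squash; lra|nra].
Qed.

Lemma f_step_1 b i : f_step b i 1 = 1.
Proof.
  pose proof (ratio_gt_1 b). pose proof (inv_ratio_bounds b). pose proof (threshold_pos b).
  unfold f_step. destruct (i <? half_len b)%nat; [|destruct (i <? half_len b + 4)%nat].
  - apply scale_I_1; lra.
  - apply zigzag_I_1; lra.
  - apply scale_I_1; lra.
Qed.

Lemma lipschitz_f_step b i : lipschitz (f_step b i).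
Proof.
  pose proof (ratio_gt_1 b). pose proof (inv_ratio_bounds b). pose proof (threshold_pos b).
  unfold f_step. destruct (i <? half_len b)%nat; [|destruct (i <? half_len b + 4)%nat].
  - apply lipschitz_scale_I; lra.
  - apply lipschitz_zigzag_I; lra.
  - apply lipschitz_scale_I; lra.
Qed.

Lemma phi_step_surj b i t' : 0 <= t' -> exists t, 0 <= t /\ phi_step b i t = t'.
Proof.
  intro Ht. pose proof (ratio_gt_1 b). pose proof (inv_ratio_bounds b). pose proof (threshold_pos b).
  unfold phi_step. destruct (i <? half_len b)%nat; [|destruct (i <? half_len b + 4)%nat].
  - exists (/ ratio b * t'). split; [nra|field; lra].
  - apply zigzag_on_surj; lra.
  - exists (ratio b * t'). split; [nra|field; lra].
Qed.

Lemma f_step_dist_id b i x : inI x -> Rabs (f_step b i x - x) <= / growth b.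
Proof.
  intro Hx. pose proof (growth_ge_1 b).
  pose proof (ratio_gt_1 b). pose proof (inv_ratio_bounds b). pose proof (threshold_ge b).
  assert (0 < / growth b) by (apply Rinv_0_lt_compat; lra).
  apply (conj_dist_id _ _ (f_step_squash b i) (f_step_1 b i)); [lra| |auto].
  intros t Ht. unfold phi_step. destruct (i <? half_len b)%nat; [|destruct (i <? half_len b + 4)%nat].
  - eapply Rle_trans; [apply squash_scale_dist; lra|].
    replace (ratio b - 1) with (/ growth b) by (unfold ratio; field; lra).
    rewrite Rabs_right; lra.
  - eapply Rle_trans; [apply squash_zigzag_on_dist; lra|].
    apply Rinv_le_contravar; lra.
  - eapply Rle_trans; [apply squash_scale_dist; lra|].
    replace (/ ratio b - 1) with (- / (growth b + 1)) by (unfold ratio; field; lra).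
    rewrite Rabs_Ropp, Rabs_right by (apply Rle_ge, Rlt_le, Rinv_0_lt_compat; lra).
    apply Rinv_le_contravar; lra.
Qed.

Lemma fseq_props k : maps_I (fseq k) /\ cont_I (fseq k) /\ surj_I (fseq k).
Proof.
  unfold fseq. destruct (block_pos k) as [b i]. split; [|split].
  - exact (conj_maps_I _ _ (f_step_squash b i) (f_step_1 b i)).
  - apply lipschitz_cont_I, lipschitz_f_step.
  - exact (conj_surj_I _ _ (f_step_squash b i) (f_step_1 b i) (phi_step_surj b i)).
Qed.

Lemma fseq_unif_id : unif_conv_I fseq (fun x => x).
Proof.
  intros eps Heps. destruct (INR_unbounded (/ eps)) as [b0 Hb0].
  exists (block_start b0). intros n x Hn Hx. unfold fseq.
  destruct (block_pos n) as [b i] eqn:E.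
  pose proof (le_INR _ _ (block_pos_late _ _ _ _ Hn E)).
  eapply Rle_lt_trans; [apply f_step_dist_id; auto|].
  unfold growth. rewrite S_INR.
  replace eps with (/ / eps) by (field; lra).
  apply Rinv_lt_contravar; [|lra].
  assert (0 < / eps) by (apply Rinv_0_lt_compat; lra). nra.
Qed.

Lemma iter_fseq_squash n t : 0 <= t ->
  iterN fseq n (squash t) = squash (iterN phiseq n t) /\ 0 <= iterN phiseq n t.
Proof.
  intro Ht. induction n as [|n [IH Hn]]; simpl; auto.
  rewrite IH. unfold fseq, phiseq. destruct (block_pos n) as [b i]. apply f_step_squash; auto.
Qed.

Lemma iter_fseq_1 n : iterN fseq n 1 = 1.
Proof. induction n; simpl; auto. rewrite IHn. unfold fseq; destruct (block_pos n); apply f_step_1. Qed.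

Lemma iter_phiseq_block b i t : (i < block_len b)%nat ->
  iterN phiseq (block_start b + S i) t = phi_step b i (iterN phiseq (block_start b + i) t).
Proof. intro. rewrite <- plus_n_Sm. simpl. unfold phiseq. rewrite block_pos_start; auto. Qed.

(** * Orbits of the half-line system *)

Fixpoint zigzag_iter (r : nat) (a y : R) : R :=
  match r with O => y | S r' => zigzag_on a (zigzag_iter r' a y) end.

Fixpoint window_coord (b : nat) (c : R) : R :=
  match b with O => c | S b' => zigzag_iter 4 (width b') (window_coord b' c) end.

Section Block.
Variables (b : nat) (c : R).
Hypothesis orbit_start : iterN phiseq (block_start b) c = growth b * window_coord b c.

Lemma orbit_expand i : (i <= half_len b)%nat ->
  iterN phiseq (block_start b + i) c = ratio b ^ i * (growth b * window_coord b c).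
Proof.
  pose proof (half_len_pos b).
  induction i as [|i IH]; intro Hi; [rewrite Nat.add_0_r, orbit_start; simpl; ring|].
  rewrite iter_phiseq_block, IH by (unfold block_len; lia).
  unfold phi_step. rewrite (proj2 (Nat.ltb_lt i _)) by lia. simpl; ring.
Qed.

Lemma orbit_zigzag r : (r <= 4)%nat ->
  iterN phiseq (block_start b + (half_len b + r)) c
  = ratio b ^ half_len b * growth b * zigzag_iter r (width b) (window_coord b c).
Proof.
  pose proof (growth_ge_1 b). pose proof (ratio_gt_1 b). pose proof (half_len_pos b).
  assert (0 < ratio b ^ half_len b) by (apply pow_lt; lra).
  assert (0 < ratio b ^ half_len b * growth b) by nra.
  induction r as [|r IH]; intro Hr; [rewrite Nat.add_0_r, orbit_expand by lia; simpl; ring|].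
  rewrite <- plus_n_Sm, iter_phiseq_block, IH by (unfold block_len; lia).
  unfold phi_step. rewrite (proj2 (Nat.ltb_ge (half_len b + r) _)) by lia.
  rewrite (proj2 (Nat.ltb_lt (half_len b + r) _)) by lia.
  cbn [zigzag_iter]. rewrite zigzag_on_scale by (auto; apply threshold_pos).
  f_equal. f_equal. unfold threshold. field. lra.
Qed.

Lemma orbit_contract s : (s <= half_len b - 1)%nat ->
  iterN phiseq (block_start b + (half_len b + 4 + s)) c
  = (/ ratio b) ^ s * (ratio b ^ half_len b * growth b * zigzag_iter 4 (width b) (window_coord b c)).
Proof.
  pose proof (half_len_pos b).
  induction s as [|s IH]; intro Hs; [rewrite Nat.add_0_r, orbit_zigzag by lia; simpl; ring|].
  rewrite <- plus_n_Sm, iter_phiseq_block, IH by (unfold block_len; lia).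
  unfold phi_step. rewrite (proj2 (Nat.ltb_ge (half_len b + 4 + s) _)) by lia.
  rewrite (proj2 (Nat.ltb_ge (half_len b + 4 + s) _)) by lia. simpl; ring.
Qed.

Lemma orbit_next_block : iterN phiseq (block_start (S b)) c = growth (S b) * window_coord (S b) c.
Proof.
  pose proof (half_len_pos b).
  replace (block_start (S b)) with (block_start b + (half_len b + 4 + (half_len b - 1)))%nat
    by (cbn [block_start]; unfold block_len; lia).
  rewrite orbit_contract by lia. change (window_coord (S b) c) with (zigzag_iter 4 (width b) (window_coord b c)).
  replace (ratio b ^ half_len b) with (ratio b * ratio b ^ (half_len b - 1))
    by (rewrite tech_pow_Rmult; f_equal; lia).
  rewrite pow_inv.
  pose proof (ratio_gt_1 b). assert (0 < ratio b ^ (half_len b - 1)) by (apply pow_lt; lra).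
  replace (growth (S b)) with (ratio b * growth b)
    by (rewrite ratio_growth; unfold growth; rewrite (S_INR (S b)); reflexivity).
  field; lra.
Qed.
End Block.

Lemma orbit_block_start b c : iterN phiseq (block_start b) c = growth b * window_coord b c.
Proof.
  induction b; [unfold growth; simpl; ring|]. apply orbit_next_block; auto.
Qed.

Lemma orbit_in_block b i c : (i < block_len b)%nat -> exists r lam, 1 <= lam /\
  iterN phiseq (block_start b + i) c = lam * growth b * zigzag_iter r (width b) (window_coord b c).
Proof.
  intro Hi. pose proof (orbit_block_start b c) as Hs. pose proof (ratio_gt_1 b).
  pose proof (half_len_pos b).
  destruct (Nat.le_gt_cases i (half_len b)).
  { exists O, (ratio b ^ i). split; [apply pow_R1_Rle; lra|].
    rewrite orbit_expand by auto. simpl; ring. }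
  destruct (Nat.le_gt_cases i (half_len b + 4)).
  { exists (i - half_len b)%nat, (ratio b ^ half_len b). split; [apply pow_R1_Rle; lra|].
    replace i with (half_len b + (i - half_len b))%nat at 1 by lia.
    apply orbit_zigzag; auto; lia. }
  set (s := (i - half_len b - 4)%nat). unfold block_len in Hi.
  exists 4%nat, (ratio b ^ (half_len b - s)). split; [apply pow_R1_Rle; lra|].
  replace i with (half_len b + 4 + s)%nat by (unfold s; lia).
  rewrite orbit_contract by (auto; unfold s; lia).
  replace (ratio b ^ half_len b) with (ratio b ^ s * ratio b ^ (half_len b - s))
    by (rewrite <- pow_add; f_equal; unfold s; lia).
  rewrite pow_inv. assert (0 < ratio b ^ s) by (apply pow_lt; lra). field; lra.
Qed.

(** * No Li-Yorke pairs *)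

Lemma inv_pow2_le k p : (k <= p)%nat -> / 2 ^ p <= / 2 ^ k.
Proof. intro. apply Rinv_le_contravar; [apply pow_lt; lra|apply Rle_pow; auto; lra]. Qed.

Lemma inv_pow2_lt k p : (p < k)%nat -> 2 * / 2 ^ k <= / 2 ^ p.
Proof.
  intro. replace (2 ^ k) with (2 * 2 ^ (k - 1)) by (rewrite tech_pow_Rmult; f_equal; lia).
  rewrite Rinv_mult, <- Rmult_assoc, Rinv_r, Rmult_1_l by lra.
  apply inv_pow2_le. lia.
Qed.

(** Windows have dyadic widths, so a dyadic lower bound [/ 2 ^ p] is never
    strictly inside a window and is preserved by every [zigzag_on (width b)]. *)
Lemma zigzag_on_width_ge b y p : / 2 ^ p <= y -> / 2 ^ p <= zigzag_on (width b) y.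
Proof.
  intro. apply zigzag_on_ge; auto; [apply width_pos|]. unfold width.
  destruct (Nat.le_gt_cases (level b) p); [left; apply inv_pow2_le | right; apply inv_pow2_lt]; auto.
Qed.

Lemma zigzag_iter_width_ge b r y p : / 2 ^ p <= y -> / 2 ^ p <= zigzag_iter r (width b) y.
Proof. intro; induction r; simpl; auto. apply zigzag_on_width_ge; auto. Qed.

Lemma window_coord_ge b c p : / 2 ^ p <= c -> / 2 ^ p <= window_coord b c.
Proof. intro; induction b; auto. apply (zigzag_iter_width_ge b 4); auto. Qed.

Lemma orbit_lower_bound n c p b i : / 2 ^ p <= c -> block_pos n = (b, i) ->
  growth b * / 2 ^ p <= iterN phiseq n c.
Proof.
  intros Hc E. destruct (block_pos_spec _ _ _ E) as [Hi ->].
  destruct (orbit_in_block b i c Hi) as [r [lam [Hlam ->]]].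
  pose proof (zigzag_iter_width_ge b r (window_coord b c) p (window_coord_ge b c p Hc)).
  pose proof (growth_ge_1 b). assert (0 < / 2 ^ p) by (apply Rinv_0_lt_compat, pow_lt; lra).
  set (z := zigzag_iter r (width b) (window_coord b c)) in *.
  assert (growth b * / 2 ^ p <= growth b * z) by (apply Rmult_le_compat_l; lra).
  assert (0 <= (lam - 1) * (growth b * z)) by (apply Rmult_le_pos; nra).
  nra.
Qed.

Lemma orbit_unbounded c : 0 < c -> forall M, exists N, forall n, (N <= n)%nat -> M < iterN phiseq n c.
Proof.
  intros Hc M.
  destruct (pow_lt_1_zero (/ 2) ltac:(rewrite Rabs_right; lra) c Hc) as [p Hp].
  specialize (Hp p (le_n p)). rewrite pow_inv, Rabs_right in Hp
    by (apply Rle_ge, Rlt_le, Rinv_0_lt_compat, pow_lt; lra).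
  assert (H2p : 0 < 2 ^ p) by (apply pow_lt; lra).
  destruct (INR_unbounded (M * 2 ^ p)) as [b0 Hb0].
  exists (block_start b0). intros n Hn. destruct (block_pos n) as [b i] eqn:E.
  eapply Rlt_le_trans; [|apply (orbit_lower_bound n c p b i); auto; lra].
  pose proof (le_INR _ _ (block_pos_late _ _ _ _ Hn E)).
  unfold growth. rewrite S_INR.
  apply (Rmult_lt_reg_r (2 ^ p)); auto. rewrite Rmult_assoc, Rinv_l; lra.
Qed.

Lemma orbit_tends_to_1 x : 0 < x <= 1 -> Un_cv (fun n => iterN fseq n x) 1.
Proof.
  intros Hx eps Heps. destruct (Req_dec x 1) as [->|Hx1].
  { exists O. intros n _. rewrite iter_fseq_1. unfold Rdist. rewrite Rminus_diag, Rabs_R0. lra. }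
  assert (Hc : 0 < unsquash x) by (apply Rdiv_lt_0_compat; lra).
  destruct (orbit_unbounded _ Hc (/ eps)) as [N HN]. exists N. intros n Hn.
  rewrite <- (squash_unsquash x) by lra.
  destruct (iter_fseq_squash n (unsquash x) ltac:(lra)) as [-> HT].
  specialize (HN n Hn). set (T := iterN phiseq n (unsquash x)) in *.
  pose proof (squash_range T HT). unfold Rdist. rewrite Rabs_left by lra.
  replace (- (squash T - 1)) with (1 - squash T) by ring. rewrite one_minus_squash by lra.
  assert (0 < / eps) by (apply Rinv_0_lt_compat; lra).
  replace eps with (/ / eps) by (field; lra). apply Rinv_lt_contravar; nra.
Qed.

Lemma f_step_0 b i : f_step b i 0 = 0.
Proof.
  assert (Hs : squash 0 = 0) by (unfold squash; field; lra).
  rewrite <- Hs at 1. rewrite (proj1 (f_step_squash b i 0 (Rle_refl 0))).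
  unfold phi_step. destruct (i <? half_len b)%nat; [|destruct (i <? half_len b + 4)%nat].
  - rewrite Rmult_0_r; auto.
  - rewrite zigzag_on_below; auto; pose proof (threshold_pos b); lra.
  - rewrite Rmult_0_r; auto.
Qed.

Lemma iter_fseq_0 n : iterN fseq n 0 = 0.
Proof. induction n; simpl; auto. rewrite IHn. unfold fseq; destruct (block_pos n); apply f_step_0. Qed.

Lemma orbit_converges x : inI x -> exists u, Un_cv (fun n => iterN fseq n x) u.
Proof.
  intros [Hx0 Hx1]. destruct (Req_dec x 0) as [->|Hx].
  - exists 0. intros eps Heps. exists O. intros n _.
    rewrite iter_fseq_0. unfold Rdist. rewrite Rminus_diag, Rabs_R0. lra.
  - exists 1. apply orbit_tends_to_1. lra.
Qed.

Lemma convergent_orbits_not_LY F x y u v :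
  Un_cv (fun n => iterN F n x) u -> Un_cv (fun n => iterN F n y) v -> ~ LY_pair F x y.
Proof.
  intros Hx Hy [_ [[d [Hd Hsup]] Hinf]].
  destruct (Req_dec u v) as [<-|Huv].
  - destruct (Hx (d / 2) ltac:(lra)) as [N1 H1]. destruct (Hy (d / 2) ltac:(lra)) as [N2 H2].
    destruct (Hsup (N1 + N2)%nat) as [n [Hn Hd2]].
    specialize (H1 n ltac:(lia)). specialize (H2 n ltac:(lia)).
    unfold Rdist in *. split_Rabs; lra.
  - assert (He : 0 < Rabs (u - v) / 3) by (pose proof (Rabs_pos_lt (u - v) ltac:(lra)); lra).
    destruct (Hx _ He) as [N1 H1]. destruct (Hy _ He) as [N2 H2].
    destruct (Hinf _ He (N1 + N2)%nat) as [n [Hn Hd2]].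
    specialize (H1 n ltac:(lia)). specialize (H2 n ltac:(lia)).
    unfold Rdist in *. split_Rabs; lra.
Qed.

Lemma no_LY_pairs_not_chaotic F :
  (forall x y, inI x -> inI y -> x <> y -> ~ LY_pair F x y) -> ~ LY_chaotic F.
Proof.
  intros HLY [S [[HSI HS] Hunc]]. apply Hunc. exists (fun _ => O). intros x y Sx Sy _.
  destruct (Req_dec x y) as [|Hxy]; auto.
  exfalso. apply (HLY x y (HSI x Sx) (HSI y Sy) Hxy), HS; auto.
Qed.

Lemma fseq_not_LY_chaotic : ~ LY_chaotic fseq.
Proof.
  apply no_LY_pairs_not_chaotic. intros x y Hx Hy _.
  destruct (orbit_converges x Hx) as [u Hu]. destruct (orbit_converges y Hy) as [v Hv].
  exact (convergent_orbits_not_LY _ _ _ _ _ Hu Hv).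
Qed.

(** * Sequence entropy *)

(** [ternary l] is the point of the middle-thirds Cantor set whose ternary
    digits are [2], [0] according as the entries of [l] are [true], [false]. *)
Definition digit (d : bool) : R := if d then 1 else 0.

Fixpoint ternary (l : list bool) : R :=
  match l with [] => 0 | d :: l' => (2 * digit d + ternary l') / 3 end.

Lemma ternary_range l : 0 <= ternary l <= 1.
Proof. induction l as [|[|] l IH]; simpl; lra. Qed.

Lemma zigzag_ternary l : zigzag (ternary l) = ternary (skipn 1 l).
Proof.
  destruct l as [|[|] l]; simpl; [apply zigzag_0| |]; pose proof (ternary_range l).
  - rewrite zigzag_hi by lra. field.
  - rewrite zigzag_lo by lra. field.
Qed.

Lemma zigzag_iter_window a r l : 0 < a ->
  zigzag_iter r a (a * (1 + ternary l)) = a * (1 + ternary (skipn r l)).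
Proof.
  intro Ha. induction r as [|r IH]; auto. simpl zigzag_iter.
  rewrite IH, zigzag_on_window, zigzag_ternary, skipn_skipn by (auto; apply ternary_range).
  reflexivity.
Qed.

Lemma zigzag_iter_below a r y : 0 < a -> y <= a -> zigzag_iter r a y = y.
Proof. intros; induction r; simpl; auto. rewrite IHr. apply zigzag_on_below; auto. Qed.

(** The blocks of level [k] are [2 ^ k - 1 + r] for [r < 2 ^ k]. *)
Section Level.
Variable k : nat.
Hypothesis k_pos : (1 <= k)%nat.
Variable l : list bool.
Let c := / 2 ^ k * (1 + ternary l).

Lemma pow2_ge_2 : (2 <= 2 ^ k)%nat.
Proof. change 2%nat with (2 ^ 1)%nat at 1. apply Nat.pow_le_mono_r; lia. Qed.

Lemma inv_pow2_pos : 0 < / 2 ^ k.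
Proof. apply Rinv_0_lt_compat, pow_lt; lra. Qed.

Lemma window_coord_early b : (b <= 2 ^ k - 1)%nat -> window_coord b c = c.
Proof.
  induction b as [|b IH]; intro Hb; auto. cbn [window_coord]. rewrite IH by lia.
  apply zigzag_iter_below; [apply width_pos|].
  assert (Hlev : (level b < k)%nat).
  { apply Nat.log2_lt_pow2; [lia|]. pose proof pow2_ge_2. lia. }
  pose proof (inv_pow2_lt k (level b) Hlev). pose proof (ternary_range l). pose proof inv_pow2_pos.
  unfold c, width. nra.
Qed.

Lemma window_coord_level r : (r <= 2 ^ k)%nat ->
  window_coord (2 ^ k - 1 + r) c = / 2 ^ k * (1 + ternary (skipn (4 * r) l)).
Proof.
  pose proof pow2_ge_2. induction r as [|r IH]; intro Hr.
  - rewrite Nat.add_0_r, window_coord_early by lia. reflexivity.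
  - replace (2 ^ k - 1 + S r)%nat with (S (2 ^ k - 1 + r)) by lia. cbn [window_coord].
    rewrite IH by lia.
    assert (Hlev : level (2 ^ k - 1 + r) = k).
    { apply Nat.log2_unique; [lia|]. rewrite Nat.pow_succ_r by lia. lia. }
    unfold width. rewrite Hlev, zigzag_iter_window, skipn_skipn by apply inv_pow2_pos.
    do 4 f_equal. lia.
Qed.

Lemma orbit_observe r : (r < 2 ^ k)%nat ->
  iterN fseq (block_start (S (2 ^ k - 2 + r))) (squash c)
  = squash (INR (2 ^ k + r) * / 2 ^ k * (1 + ternary (skipn (4 * r) l))).
Proof.
  intro Hr. pose proof pow2_ge_2. pose proof inv_pow2_pos. pose proof (ternary_range l).
  rewrite (proj1 (iter_fseq_squash _ c ltac:(unfold c; nra))). f_equal.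
  rewrite orbit_block_start. replace (S (2 ^ k - 2 + r)) with (2 ^ k - 1 + r)%nat by lia.
  rewrite window_coord_level by lia. unfold growth.
  replace (S (2 ^ k - 1 + r)) with (2 ^ k + r)%nat by lia. ring.
Qed.

Lemma observe_scale_range r : (r < 2 ^ k)%nat -> 1 <= INR (2 ^ k + r) * / 2 ^ k <= 2.
Proof.
  intro Hr. assert (E : INR (2 ^ k) = 2 ^ k) by (rewrite pow_INR; reflexivity).
  assert (0 < 2 ^ k) by (apply pow_lt; lra).
  assert (INR (2 ^ k + r) <= 2 * 2 ^ k).
  { rewrite <- E. change 2 with (INR 2) at 1. rewrite <- mult_INR. apply le_INR. lia. }
  rewrite plus_INR, E in *. pose proof (pos_INR r).
  split; apply (Rmult_le_reg_r (2 ^ k)); auto; rewrite Rmult_assoc, Rinv_l; lra.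
Qed.
End Level.

Lemma ternary_prefix_sep n l l' : length l = length l' -> firstn n l <> firstn n l' ->
  / 3 ^ n <= Rabs (ternary l - ternary l').
Proof.
  revert l l'; induction n as [|n IH]; intros l l' Hlen Hne; [simpl in Hne; congruence|].
  destruct l as [|d l]; destruct l' as [|d' l']; simpl in Hlen, Hne; try congruence.
  injection Hlen as Hlen. pose proof (ternary_range l); pose proof (ternary_range l').
  assert (0 < 3 ^ n) by (apply pow_lt; lra).
  destruct (Bool.bool_dec d d') as [<-|Hd]; simpl ternary.
  - assert (Hsep : / 3 ^ n <= Rabs (ternary l - ternary l')) by (apply IH; congruence).
    replace ((2 * digit d + ternary l) / 3 - (2 * digit d + ternary l') / 3)
      with ((ternary l - ternary l') * / 3) by field.
    rewrite Rabs_mult, (Rabs_right (/ 3)) by lra. simpl. rewrite Rinv_mult, Rmult_comm.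
    apply Rmult_le_compat_r; [apply Rlt_le, Rinv_0_lt_compat; lra|exact Hsep].
  - assert (/ 3 ^ S n <= / 3) by (apply Rinv_le_contravar; [lra|simpl; pose proof (pow_R1_Rle 3 n); lra]).
    destruct d, d'; try congruence; simpl digit; split_Rabs; lra.
Qed.

Lemma ternary_block_sep n l l' : length l = n -> length l' = n -> l <> l' ->
  exists r, (4 * r < n)%nat /\ / 81 <= Rabs (ternary (skipn (4 * r) l) - ternary (skipn (4 * r) l')).
Proof.
  revert l l'; induction n as [n IH] using lt_wf_ind. intros l l' Hl Hl' Hne.
  destruct (list_eq_dec Bool.bool_dec (firstn 4 l) (firstn 4 l')) as [E|E].
  - assert (Hn : (4 < n)%nat).
    { destruct (Nat.le_gt_cases n 4); auto. exfalso. apply Hne.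
      rewrite <- (firstn_all2 (n := 4) l), <- (firstn_all2 (n := 4) l') by lia. auto. }
    assert (skipn 4 l <> skipn 4 l').
    { intro E2. apply Hne. rewrite <- (firstn_skipn 4 l), <- (firstn_skipn 4 l'). congruence. }
    destruct (IH (n - 4)%nat ltac:(lia) (skipn 4 l) (skipn 4 l')) as [r [Hr Hsep]]; auto;
      try (rewrite length_skipn; lia).
    exists (S r). rewrite !skipn_skipn in Hsep. replace (4 * S r)%nat with (4 * r + 4)%nat by lia.
    split; [lia|exact Hsep].
  - exists O. split; [destruct n; [destruct l, l'; simpl in *; congruence|lia]|].
    change (4 * 0)%nat with 0%nat. rewrite !skipn_0.
    replace (/ 81) with (/ 3 ^ 4) by (simpl; field).
    apply ternary_prefix_sep; congruence.
Qed.

Fixpoint words (n : nat) : list (list bool) :=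
  match n with
  | O => [[]]
  | S n' => map (cons false) (words n') ++ map (cons true) (words n')
  end.

Lemma in_words_length n l : In l (words n) -> length l = n.
Proof.
  revert l; induction n as [|n IH]; simpl; intros l H; [destruct H as [<-|[]]; auto|].
  apply in_app_or in H. destruct H as [H|H]; apply in_map_iff in H; destruct H as [l' [<- H]];
    simpl; f_equal; auto.
Qed.

Lemma words_length n : length (words n) = (2 ^ n)%nat.
Proof. induction n; simpl; auto. rewrite length_app, !length_map, IHn. lia. Qed.

Lemma words_NoDup n : NoDup (words n).
Proof.
  induction n; simpl; [repeat constructor; auto|].
  apply NoDup_app; try (apply NoDup_map_NoDup_ForallPairs; auto; intros ? ? _ _; congruence).
  intros l H1 H2. apply in_map_iff in H1, H2.
  destruct H1 as [? [<- _]]. destruct H2 as [? [E _]]. discriminate.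
Qed.

Lemma squash_sep K s s' : 1 <= K <= 2 -> 0 <= s <= 1 -> 0 <= s' <= 1 -> / 81 <= Rabs (s - s') ->
  / 2025 <= Rabs (squash (K * (1 + s)) - squash (K * (1 + s'))).
Proof.
  intros HK Hs Hs' Hd. rewrite squash_sub by nra.
  replace (K * (1 + s) - K * (1 + s')) with (K * (s - s')) by ring.
  set (D := (1 + K * (1 + s)) * (1 + K * (1 + s'))).
  assert (2 <= 1 + K * (1 + s) <= 5) by nra. assert (2 <= 1 + K * (1 + s') <= 5) by nra.
  assert (HD : 0 < D <= 25) by (unfold D; split; nra).
  unfold Rdiv. rewrite !Rabs_mult, (Rabs_right K), (Rabs_right (/ D))
    by (try apply Rle_ge, Rlt_le, Rinv_0_lt_compat; lra).
  assert (/ 25 <= / D) by (apply Rinv_le_contravar; lra).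
  assert (/ 81 * / 25 <= Rabs (s - s') * / D) by (apply Rmult_le_compat; lra).
  assert (0 <= Rabs (s - s') * / D) by lra. nra.
Qed.

Definition obs_times (j : nat) : nat := block_start (S j).
Definition word_point (k : nat) (l : list bool) : R := squash (/ 2 ^ k * (1 + ternary l)).

Lemma obs_times_incr : strict_incr_pos obs_times.
Proof.
  split; [unfold obs_times; simpl; unfold block_len; lia|].
  intro j. unfold obs_times. change (block_start (S (S j))) with (block_start (S j) + block_len (S j))%nat.
  unfold block_len; lia.
Qed.

Lemma word_point_in_I k l : inI (word_point k l).
Proof.
  unfold word_point. pose proof (ternary_range l).
  assert (0 < / 2 ^ k) by (apply Rinv_0_lt_compat, pow_lt; lra).
  pose proof (squash_range (/ 2 ^ k * (1 + ternary l)) ltac:(nra)). red; lra.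
Qed.

Lemma word_points_sep k eps l l' : (1 <= k)%nat -> eps < / 2025 ->
  In l (words (4 * 2 ^ k)) -> In l' (words (4 * 2 ^ k)) -> l <> l' ->
  sep_pair fseq obs_times (2 ^ S k) eps (word_point k l) (word_point k l').
Proof.
  intros Hk Heps Hl Hl' Hne. apply in_words_length in Hl, Hl'.
  destruct (ternary_block_sep _ l l' Hl Hl' Hne) as [r [Hr Hsep]].
  pose proof (pow2_ge_2 k Hk).
  exists (2 ^ k - 2 + r)%nat. split; [rewrite Nat.pow_succ_r; lia|].
  unfold obs_times, word_point. rewrite !orbit_observe by (auto; lia).
  pose proof (observe_scale_range k Hk r ltac:(lia)).
  enough (/ 2025 <= Rabs (squash (INR (2 ^ k + r) * / 2 ^ k * (1 + ternary (skipn (4 * r) l)))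
                        - squash (INR (2 ^ k + r) * / 2 ^ k * (1 + ternary (skipn (4 * r) l')))))
    by lra.
  apply squash_sep; auto; apply ternary_range.
Qed.

Lemma sep_set_map {T : Type} F A n eps (pt : T -> R) (L : list T) : 0 <= eps -> NoDup L ->
  (forall a, In a L -> inI (pt a)) ->
  (forall a a', In a L -> In a' L -> a <> a' -> sep_pair F A n eps (pt a) (pt a')) ->
  sep_set F A n eps (map pt L).
Proof.
  intros Heps HL Hin Hsep. split; [|split].
  - apply NoDup_map_NoDup_ForallPairs; auto. intros a a' Ha Ha' E.
    destruct (classic (a = a')) as [|Hne]; auto. exfalso.
    destruct (Hsep a a' Ha Ha' Hne) as [j [_ Hj]].
    rewrite E, Rminus_diag, Rabs_R0 in Hj. lra.
  - intros x Hx. apply in_map_iff in Hx. destruct Hx as [a [<- Ha]]. auto.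
  - intros x y Hx Hy Hxy. apply in_map_iff in Hx, Hy.
    destruct Hx as [a [<- Ha]]. destruct Hy as [a' [<- Ha']].
    apply Hsep; auto. intros ->. auto.
Qed.

Lemma words_rate k : ln (INR (2 ^ (4 * 2 ^ k))) / INR (2 ^ S k) = ln 4.
Proof.
  rewrite !pow_INR, ln_pow, mult_INR, pow_INR by (simpl; lra).
  replace 4 with (2 * 2) by ring. rewrite ln_mult by lra.
  replace (INR 4) with 4 by (simpl; ring). change (INR 2) with 2.
  rewrite <- tech_pow_Rmult. field. apply pow_nonzero. lra.
Qed.

Lemma fseq_seq_entropy : seq_entropy_ge fseq obs_times (ln 3).
Proof.
  intros c' Hc'. exists (/ 2025). split; [lra|]. intros eps [Heps0 Heps] N.
  set (k := S N). assert (Hk : (1 <= k)%nat) by (unfold k; lia).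
  exists (2 ^ S k)%nat.
  assert (N < 2 ^ S k)%nat.
  { pose proof (Nat.pow_gt_lin_r 2 (S k) ltac:(lia)). unfold k in *. lia. }
  split; [lia|]. split; [lia|].
  exists (2 ^ (4 * 2 ^ k))%nat. split.
  - exists (map (word_point k) (words (4 * 2 ^ k))).
    split; [|rewrite length_map, words_length; auto].
    apply sep_set_map; [lra|apply words_NoDup|intros; apply word_point_in_I|].
    intros l l' Hl Hl' Hne. apply word_points_sep; auto.
  - rewrite words_rate. assert (ln 3 < ln 4) by (apply ln_increasing; lra). lra.
Qed.

Theorem mainTheorem1 :
  exists F : nat -> R -> R,
    (forall k, maps_I (F k) /\ cont_I (F k) /\ surj_I (F k)) /\
    (exists f : R -> R, maps_I f /\ cont_I f /\ unif_conv_I F f) /\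
    (exists S : nat -> nat, strict_incr_pos S /\ seq_entropy_ge F S (ln 3)) /\
    ~ LY_chaotic F.
Proof.
  exists fseq. split; [exact fseq_props|]. split; [|split].
  - exists (fun x => x). split; [intros x Hx; exact Hx|]. split; [|exact fseq_unif_id].
    apply lipschitz_cont_I, (lipschitz_ext (fun x => 1 * x + 0)); [intro; ring|apply lipschitz_affine].
  - exists obs_times. split; [exact obs_times_incr|exact fseq_seq_entropy].
  - exact fseq_not_LY_chaotic.
Qed.
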